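(* Let $G$ be a connected graph with minimum degree $\delta(G)\ge 2$. If $G$ has an independent $\Gamma$-set, then $\Gamma(G)=\Gamma_{\rm cer}(G)$.
   Context: All graphs are finite and simple; $\delta(G)$ is the minimum degree. A set $D\subseteq V_G$ is a dominating set of $G$ if every vertex of $V_G-D$ has a neighbor in $D$; $\Gamma(G)$ is the maximum cardinality of a minimal (with respect to inclusion) dominating set, and a $\Gamma$-set is a minimal dominating set of cardinality $\Gamma(G)$. A set $D$ is a certified dominating set of $G$ if $D$ is dominating and every vertex of $D$ has either zero or at least two neighbors in $V_G-D$; $\Gamma_{\rm cer}(G)$ is the maximum cardinality of a minimal (with respect to inclusion) certified dominating set. *)

From mathcomp Require Import all_boot.
Set Implicit Arguments. Unset Strict Implicit. Unset Printing Implicit Defensive.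

(* A finite simple graph: vertex type T : finType, adjacency e : rel T,
   assumed symmetric and irreflexive (hypotheses of the theorem). *)

Definition open_nbhd (T : finType) (e : rel T) (v : T) : {set T} :=
  [set u | e v u].

Definition deg (T : finType) (e : rel T) (v : T) : nat := #|open_nbhd e v|.

Definition dominating (T : finType) (e : rel T) (D : {set T}) : bool :=
  [forall x, (x \notin D) ==> [exists y in D, e x y]].

Definition minimal_dominating (T : finType) (e : rel T) (D : {set T}) : bool :=
  dominating e D && [forall D' : {set T}, (D' \proper D) ==> ~~ dominating e D'].

Definition certified_dominating (T : finType) (e : rel T) (D : {set T}) : bool :=
  dominating e D &&
  [forall v in D, #|open_nbhd e v :\: D| != 1].

Definition minimal_certified_dominating (T : finType) (e : rel T) (D : {set T}) : bool :=
  certified_dominating e D &&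
  [forall D' : {set T}, (D' \proper D) ==> ~~ certified_dominating e D'].

Definition Gamma (T : finType) (e : rel T) : nat :=
  \max_(D : {set T} | minimal_dominating e D) #|D|.

Definition Gamma_cer (T : finType) (e : rel T) : nat :=
  \max_(D : {set T} | minimal_certified_dominating e D) #|D|.

Definition independent (T : finType) (e : rel T) (D : {set T}) : bool :=
  [forall x in D, forall y in D, ~~ e x y].

Definition Gamma_set (T : finType) (e : rel T) (D : {set T}) : bool :=
  minimal_dominating e D && (#|D| == Gamma e).

Definition connected_graph (T : finType) (e : rel T) : Prop :=
  (0 < #|T|) /\ forall x y : T, connect e x y.

From mathcomp Require Import all_boot.
From mathcomp Require Import zify.
Set Implicit Arguments. Unset Strict Implicit. Unset Printing Implicit Defensive.

(* With minimum degree at least 2, every vertex of an independent Gamma-set has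
   at least two neighbours, all outside the set, so the set is certified; being
   minimal dominating, it is also minimal certified, whence Gamma <= Gamma_cer.
   Conversely, let D be minimal certified dominating. If some b in D had no
   neighbour outside D, keep the boundary A of D (its vertices with a neighbour
   outside D) together with a maximal independent set S among the vertices of
   D having no neighbour outside D nor in A. Then A :|: S is a proper
   certified dominating subset of D, a contradiction. So every vertex of D has
   at least two neighbours outside D, and then every dominating subset of D is
   certified: D is minimal dominating and Gamma_cer <= Gamma. *)

Section Domination.
Variables (T : finType) (e : rel T).
Notation N := (open_nbhd e).

Lemma in_open_nbhd u y : (y \in N u) = e u y.
Proof. by rewrite inE. Qed.

Lemma dominatingP (D : {set T}) :
  reflect (forall x, x \notin D -> exists2 y, y \in D & e x y) (dominating e D).
Proof.
apply: (iffP forallP) => [dD x xD | dD x]; last first.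
  apply/implyP => xD; have [y yD exy] := dD x xD.
  by apply/exists_inP; exists y.
by have /implyP/(_ xD)/exists_inP[y yD exy] := dD x; exists y.
Qed.

Lemma independentP (S : {set T}) :
  reflect {in S &, forall x y, ~~ e x y} (independent e S).
Proof.
apply: (iffP forall_inP) => [iS x y xS yS | iS x xS].
  by have /forall_inP := iS x xS; apply.
by apply/forall_inP => y; apply: iS.
Qed.

Lemma certified_dominatingP (D : {set T}) :
  reflect (dominating e D /\ {in D, forall v, #|N v :\: D| != 1})
          (certified_dominating e D).
Proof. by apply: (iffP andP) => -[dD /forall_inP cD]; split=> //; apply/forall_inP. Qed.

Definition boundary (D : {set T}) : {set T} := [set u in D | ~~ (N u \subset D)].

Lemma boundary_sub (D : {set T}) : boundary D \subset D.
Proof. by apply/subsetP => u; rewrite inE => /andP[]. Qed.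

Lemma card_boundary_nbhd (D : {set T}) u :
  certified_dominating e D -> u \in boundary D -> 1 < #|N u :\: D|.
Proof.
case/certified_dominatingP=> _ cD; rewrite inE => /andP[uD].
rewrite -setD_eq0 -card_gt0; have := cD u uD; lia.
Qed.

Lemma certified_dominating_subset (D D' : {set T}) :
  certified_dominating e D -> D \subset boundary D ->
  D' \subset D -> dominating e D' -> certified_dominating e D'.
Proof.
move=> cD sDb sD'D dD'; apply/certified_dominatingP; split=> // u uD'.
have uD := subsetP sD'D u uD'.
have := card_boundary_nbhd cD (subsetP sDb u uD).
have := subset_leq_card (setDS (N u) sD'D); lia.
Qed.

Definition independent_in (B S : {set T}) : bool := (S \subset B) && independent e S.

Hypothesis e_sym : symmetric e.
Hypothesis e_irr : irreflexive e.

Lemma independent_setU1 (S : {set T}) x :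
  independent e S -> {in S, forall s, ~~ e x s} -> independent e (x |: S).
Proof.
move=> /independentP iS nxS; apply/independentP => y z.
case/setU1P=> [-> | yS] /setU1P[-> | zS]; rewrite ?e_irr ?nxS //.
  by rewrite e_sym nxS.
exact: iS.
Qed.

Lemma maxset_independent_adj (B S : {set T}) x :
  maxset (independent_in B) S ->
  x \in B -> x \notin S -> exists2 s, s \in S & e x s.
Proof.
move=> /maxsetP[/andP[sSB iS] maxS] xB xS.
have [/exists_inP[s sS exs] | /exists_inP nxS] := boolP [exists s in S, e x s].
  by exists s.
have xSS : x |: S = S.
  apply: maxS; last exact: subsetUr.
  rewrite /independent_in subUset sub1set xB sSB /=.
  by apply: independent_setU1 => // s sS; apply/negP => exs; apply: nxS; exists s.
by move: xS; rewrite -xSS setU11.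
Qed.

Hypothesis mindeg : forall v : T, 2 <= deg e v.

Lemma independent_nbhd_card (D : {set T}) v :
  independent e D -> v \in D -> 1 < #|N v :\: D|.
Proof.
move=> /independentP iD vD.
have -> : N v :\: D = N v.
  apply/setDidPl; rewrite disjoint_sym; apply/pred0P => y /=.
  by apply/andP => -[yD]; rewrite in_open_nbhd; apply/negP/iD.
exact: mindeg.
Qed.

Lemma independent_minimal_dominating_certified (D : {set T}) :
  independent e D -> minimal_dominating e D -> minimal_certified_dominating e D.
Proof.
move=> iD /andP[dD /forallP minD]; apply/andP; split.
  apply/certified_dominatingP; split=> // v vD.
  by rewrite neq_ltn (independent_nbhd_card iD vD) orbT.
apply/forallP => D'; apply/implyP => pD'D; apply/negP => /andP[dD' _].
by have /implyP/(_ pD'D) := minD D'; rewrite dD'.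
Qed.

Section BoundaryCore.
Variable D : {set T}.

Definition deep_interior : {set T} :=
  [set u in D | (N u \subset D) && [disjoint N u & boundary D]].

Variable S : {set T}.
Hypothesis maxS : maxset (independent_in deep_interior) S.

Let boundary_core_sub : boundary D :|: S \subset D.
Proof.
case/maxsetP: maxS => /andP[sS _] _; rewrite subUset boundary_sub /=.
by apply: subset_trans sS _; apply/subsetP => u; rewrite inE => /andP[].
Qed.

Let core_nbhd_outside s y : s \in S -> y \in N s -> y \notin boundary D :|: S.
Proof.
case/maxsetP: maxS => /andP[sS /independentP iS] _ sS' Nsy.
have := subsetP sS s sS'; rewrite inE => /and3P[_ _ /pred0P nsb].
rewrite in_setU negb_or; apply/andP; split.
  by apply/negP => yb; have := nsb y; rewrite /= Nsy yb.
by apply/negP => yS; have := iS s y sS' yS; rewrite -in_open_nbhd Nsy.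
Qed.

Lemma boundary_core_proper b :
  b \in D -> N b \subset D -> boundary D :|: S \proper D.
Proof.
move=> bD sNb; apply/properP; split=> //.
have [bS | bS] := boolP (b \in S); last first.
  by exists b; rewrite // in_setU negb_or bS inE bD sNb.
have /card_gt0P[y Nby] : 0 < #|N b| by have := mindeg b; rewrite /deg; lia.
by exists y; [apply: (subsetP sNb) | apply: core_nbhd_outside Nby].
Qed.

Hypothesis cD : certified_dominating e D.

Lemma boundary_core_dominating : dominating e (boundary D :|: S).
Proof.
case/certified_dominatingP: cD => /dominatingP dD _.
apply/dominatingP => x; rewrite in_setU negb_or => /andP[xb xS].
have [xD | xD] := boolP (x \in D); last first.
  have [y yD exy] := dD x xD; exists y => //.
  apply/setUP; left; rewrite inE yD /=.
  by apply/subsetPn; exists x; rewrite // in_open_nbhd e_sym.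
have [/exists_inP[a ab exa] | /exists_inP nxb] := boolP [exists a in boundary D, e x a].
  by exists a; rewrite // in_setU ab.
have xdeep : x \in deep_interior.
  rewrite inE xD; move: xb; rewrite inE xD negbK => -> /=.
  apply/pred0P => a /=; apply/andP => -[].
  by rewrite in_open_nbhd => exa ab; apply: nxb; exists a.
have [s sS exs] := maxset_independent_adj maxS xdeep xS.
by exists s; rewrite // in_setU sS orbT.
Qed.

Lemma boundary_core_certified : certified_dominating e (boundary D :|: S).
Proof.
apply/certified_dominatingP; split; first exact: boundary_core_dominating.
move=> u /setUP[ub | uS].
  have := card_boundary_nbhd cD ub.
  have := subset_leq_card (setDS (N u) boundary_core_sub); lia.
have : N u \subset N u :\: (boundary D :|: S).
  by apply/subsetP => y Nuy; rewrite inE Nuy andbT (core_nbhd_outside uS).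
by move/subset_leq_card; have := mindeg u; rewrite /deg; lia.
Qed.

End BoundaryCore.

Lemma minimal_certified_dominating_boundary (D : {set T}) :
  minimal_certified_dominating e D -> D \subset boundary D.
Proof.
case/andP=> cD /forallP minD; apply/subsetP => b bD; rewrite inE bD /=.
apply/negP => sNb.
have indep0 : independent_in (deep_interior D) set0.
  by rewrite /independent_in sub0set; apply/independentP => x; rewrite inE.
have [S maxS _] := maxset_exists indep0.
have /implyP/(_ (boundary_core_proper maxS bD sNb)) := minD (boundary D :|: S).
by rewrite (boundary_core_certified maxS cD).
Qed.

Lemma minimal_certified_dominating_minimal (D : {set T}) :
  minimal_certified_dominating e D -> minimal_dominating e D.
Proof.
move=> mcD; have sDb := minimal_certified_dominating_boundary mcD.
case/andP: mcD => cD /forallP minD; apply/andP; split; first by case/andP: cD.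
apply/forallP => D'; apply/implyP => pD'D; apply/negP => dD'.
have /implyP/(_ pD'D) := minD D'; apply/negP/negPn.
exact: certified_dominating_subset cD sDb (proper_sub pD'D) dD'.
Qed.

End Domination.

Theorem theorem3p5 (T : finType) (e : rel T)
  (e_sym : symmetric e) (e_irr : irreflexive e)
  (G_conn : connected_graph e)
  (G_mindeg : forall v : T, 2 <= deg e v)
  (G_indep : exists D : {set T}, Gamma_set e D && independent e D) :
  Gamma e = Gamma_cer e.
Proof.
have [D /andP[/andP[mdD /eqP GammaD] iD]] := G_indep.
apply/anti_leq/andP; split.
  rewrite -GammaD; apply: leq_bigmax_cond.
  exact: independent_minimal_dominating_certified.
apply/bigmax_leqP => D' mcD'; apply: leq_bigmax_cond.
exact: minimal_certified_dominating_minimal.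
Qed.
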